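(* For $\theta>0$ let $\Phi(1,\theta+1,\theta)=\sum_{n\ge0}\theta^n/(\theta+1)_n$ and let $\varphi_\theta$ be the probability on $D=\{1,2,\dots\}$ given by $$\varphi_\theta(d)=\frac{1}{\Phi(1,\theta+1,\theta)-1}\cdot\frac{\theta^d}{(\theta+1)_d}\qquad(d\in D).$$ Let $\tilde d_1,\tilde d_2,\dots$ be the coordinate maps on $D^\infty$, $\bar d^{(n)}=\frac1n\sum_{k=1}^n\tilde d_k$, let $\theta_0>0$, and let $$D_0=\Big\{(d_1,d_2,\dots)\in D^\infty:\exists n_0\text{ such that }\tfrac1n\textstyle\sum_{k=1}^n d_k>1\text{ for every }n\ge n_0\Big\}.$$ Then $\varphi_{\theta_0}^\infty(D_0)=1$, where $\varphi^\infty_{\theta_0}$ is the product measure. Moreover, for each point of $D_0$ and each $n\ge n_0$, the equation $$\Phi(1,\theta+1,\theta)=1+\frac{\theta}{\bar d^{(n)}}$$ has a unique solution $\theta>0$.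
   Context: $(a)_n$ denotes the rising factorial $a(a+1)\cdots(a+n-1)$, $(a)_0=1$. *)

From HB Require Import structures.
From mathcomp Require Import all_boot all_order all_algebra.
From mathcomp Require Import all_classical all_reals all_analysis.
Set Implicit Arguments. Unset Strict Implicit. Unset Printing Implicit Defensive.
Import Order.TTheory GRing.Theory Num.Theory.
Local Open Scope classical_set_scope.
Local Open Scope ring_scope.

Definition rising {R : numDomainType} (a : R) (n : nat) : R :=
  \prod_(i < n) (a + i%:R).

Definition Phi {R : realType} (t : R) : R :=
  \big[+%R/0]_(0 <= n <oo) (t ^+ n / rising (t + 1) n).

Definition D := {n : nat | (0 < n)%N}.
HB.instance Definition _ := Choice.on D.
HB.instance Definition _ := isPointed.Build D (exist _ 1%N isT).

Definition varphi {R : realType} (t : R) (d : D) : R :=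
  (Phi t - 1)^-1 * (t ^+ (val d) / rising (t + 1) (val d)).

(* D^oo : sequences x with x k = d_{k+1} *)
Definition cylinder (n : nat) (a : nat -> D) : set (nat -> D) :=
  [set x | forall i, (i < n)%N -> x i = a i].

Definition cylinders : set (set (nat -> D)) :=
  [set C | exists n a, C = cylinder n a].

Notation Dinf := (g_sigma_algebraType cylinders).

(* P is the product measure varphi^oo: it agrees with the product of the
   marginals on all cylinders (this determines P uniquely). *)
Definition is_product_measure {R : realType} (phi : D -> R)
    (P : {measure set Dinf -> \bar R}) : Prop :=
  forall n a, P (cylinder n a) = (\prod_(i < n) phi (a i))%:E.

Definition dbar {R : realType} (n : nat) (x : nat -> D) : R :=
  n%:R^-1 * \sum_(k < n) ((val (x k))%:R : R).

Definition D0 {R : realType} : set (nat -> D) :=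
  [set x | exists n0, forall n, (n0 <= n)%N -> 1 < dbar (R := R) n x].

(* Write u_n(t) = t^n / (t+1)_n, so that Phi t = sum_n u_n(t) and varphi_t(d) is
   proportional to u_d(t). From u_(n+1) = u_n t / (t+n+1) one gets
   sum_(i <= N) i u_i(t) = t (1 - u_N(t)), so t / (Phi t - 1) is the mean of
   varphi_t and the equation asks for this mean to equal dbar^(n).
   For t < s the ratio u_n(s) / u_n(t) is nondecreasing in n, so by Chebyshev's
   sum inequality the mean is strictly increasing in t, i.e. (Phi t - 1) / t is
   strictly decreasing. This gives uniqueness and, together with the monotonicity
   of Phi, the continuity of Phi; existence then follows from the intermediate
   value theorem.
   Since every d_k is at least 1, the means of a sequence eventually exceed 1
   unless the sequence is constantly 1, an event of probability
   lim varphi(1)^n = 0. *)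

From HB Require Import structures.
From mathcomp Require Import all_boot all_order all_algebra.
From mathcomp Require Import all_classical all_reals all_analysis.
From mathcomp Require Import lra ring.
Import Order.TTheory GRing.Theory Num.Theory.
Import numFieldNormedType.Exports.
Local Open Scope classical_set_scope.
Local Open Scope ring_scope.

Lemma risingSr {R : numDomainType} (a : R) n : rising a n.+1 = rising a n * (a + n%:R).
Proof. by rewrite /rising big_ord_recr. Qed.

Lemma rising_gt0 {R : numDomainType} (a : R) n : 0 < a -> 0 < rising a n.
Proof. by move=> a0; apply: prodr_gt0 => i _; rewrite ltr_wpDr. Qed.

Lemma ltr_div_addr {R : realFieldType} (c t s : R) : 0 < c -> 0 <= t -> t < s ->
  t / (t + c) < s / (s + c).
Proof.
move=> c0 t0 ts; have tc : 0 < t + c by lra.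
rewrite ltr_pdivrMr // mulrAC ltr_pdivlMr; last by lra.
by rewrite !mulrDr (mulrC t s) ltrD2l ltr_pM2r.
Qed.

Lemma ler_div_addr {R : realFieldType} (c t s : R) : 0 < c -> 0 <= t -> t <= s ->
  t / (t + c) <= s / (s + c).
Proof.
move=> c0 t0; rewrite le_eqVlt => /predU1P[<- //|ts].
exact/ltW/ltr_div_addr.
Qed.

Definition chebyshev_gap {R : ringType} (a b w : nat -> R) N :=
  (\sum_(i < N) a i) * (\sum_(i < N) w i * b i) -
  (\sum_(i < N) b i) * (\sum_(i < N) w i * a i).

Section ChebyshevSum.
Variable R : realDomainType.
Variables a b w : nat -> R.

Lemma chebyshev_gap_double_sum N : chebyshev_gap a b w N *+ 2 =
  \sum_(k < N) \sum_(n < N) (a k * b n - b k * a n) * (w n - w k).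
Proof.
have -> : \sum_(k < N) \sum_(n < N) (a k * b n - b k * a n) * (w n - w k) =
   \sum_(k < N) \sum_(n < N) (a k * b n - b k * a n) * w n +
   \sum_(n < N) \sum_(k < N) (a n * b k - b n * a k) * w k.
  rewrite [X in _ + X]exchange_big /= -big_split /=; apply: eq_bigr => k _.
  by rewrite -big_split /=; apply: eq_bigr => n _; ring.
rewrite /chebyshev_gap mulr2n; congr (_ + _);
  rewrite !mulr_suml -sumrB; apply: eq_bigr => k _;
  by rewrite !mulr_sumr -sumrB; apply: eq_bigr => n _; ring.
Qed.

Hypothesis w_nd : {homo w : m n / (m <= n)%N >-> m <= n}.
Hypothesis ab_lr : forall k n, (k <= n)%N -> b k * a n <= a k * b n.

Let term_ge0 k n : 0 <= (a k * b n - b k * a n) * (w n - w k).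
Proof.
have [kn|nk] := leqP k n.
  by rewrite mulr_ge0 // subr_ge0 ?ab_lr ?w_nd.
rewrite mulr_le0 // subr_le0; last exact/w_nd/ltnW.
by rewrite [_ * b n]mulrC [_ * a n]mulrC ab_lr // ltnW.
Qed.

Lemma chebyshev_gap_ge j l N : (j < N)%N -> (l < N)%N ->
  (a j * b l - b j * a l) * (w l - w j) <= chebyshev_gap a b w N *+ 2.
Proof.
move=> jN lN; rewrite chebyshev_gap_double_sum.
rewrite (bigD1 (Ordinal jN)) //= (bigD1 (Ordinal lN)) //= -addrA lerDl.
by apply: addr_ge0; do ![apply: sumr_ge0 => ? _]; apply: term_ge0.
Qed.
End ChebyshevSum.

Section Kummer.
Variable R : realType.
Implicit Types t s : R.

Definition Phi_term t n : R := t ^+ n / rising (t + 1) n.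

Let rising_t1_gt0 t n : 0 <= t -> 0 < rising (t + 1) n.
Proof. by move=> t0; rewrite rising_gt0 // ltr_wpDl. Qed.

Lemma Phi_term0 t : Phi_term t 0 = 1.
Proof. by rewrite /Phi_term /rising big_ord0 expr0 divr1. Qed.

Lemma Phi_termS t n : 0 <= t ->
  Phi_term t n.+1 = Phi_term t n * (t / (t + n.+1%:R)).
Proof.
move=> t0; have r0 := lt0r_neq0 (rising_t1_gt0 _ n t0).
have tn0 : t + n.+1%:R != 0 by rewrite lt0r_neq0 // ltr_wpDl.
rewrite /Phi_term risingSr exprSr -natr1 in tn0 *.
by field; rewrite tn0 r0.
Qed.

Lemma Phi_term1 t : 0 <= t -> Phi_term t 1 = t / (t + 1).
Proof. by move=> t0; rewrite Phi_termS // Phi_term0 mul1r. Qed.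

Lemma Phi_term_gt0 t n : 0 < t -> 0 < Phi_term t n.
Proof. by move=> t0; rewrite divr_gt0 ?exprn_gt0 ?rising_t1_gt0 ?ltW. Qed.

Lemma Phi_term_ge0 t n : 0 <= t -> 0 <= Phi_term t n.
Proof. by move=> t0; rewrite divr_ge0 ?exprn_ge0 // ltW ?rising_t1_gt0. Qed.

Lemma Phi_term_le1 t n : 0 <= t -> Phi_term t n <= 1.
Proof.
move=> t0; elim: n => [|n IH]; first by rewrite Phi_term0.
rewrite Phi_termS // mulr_ile1 ?Phi_term_ge0 ?divr_ge0 ?addr_ge0 //.
by rewrite ler_pdivrMr ?mul1r ?lerDl // ltr_wpDl.
Qed.

Lemma sum_index_Phi_term t N : 0 <= t ->
  \sum_(i < N.+1) i%:R * Phi_term t i = t * (1 - Phi_term t N).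
Proof.
move=> t0; elim: N => [|N IH].
  by rewrite big_ord_recr big_ord0 /= Phi_term0 mul0r add0r subrr mulr0.
rewrite big_ord_recr /= IH Phi_termS //.
have tN0 : t + N.+1%:R != 0 by rewrite lt0r_neq0 // ltr_wpDl.
rewrite -natr1 in tN0 *.
by field.
Qed.

Lemma sum_index_Phi_term_le t N : 0 <= t -> \sum_(i < N) i%:R * Phi_term t i <= t.
Proof.
move=> t0; case: N => [|N]; first by rewrite big_ord0.
by rewrite sum_index_Phi_term // ler_piMr // gerBl Phi_term_ge0.
Qed.

Lemma Phi_term_ratio_le t s k n : 0 <= t -> t <= s -> (k <= n)%N ->
  Phi_term s k * Phi_term t n <= Phi_term t k * Phi_term s n.
Proof.
move=> t0 ts /subnKC <-; have s0 := le_trans t0 ts.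
elim: (n - k)%N => [|d IH]; first by rewrite addn0 mulrC.
rewrite addnS !Phi_termS // [_ * (_ * (t / _))]mulrA [_ * (_ * (s / _))]mulrA.
apply: ler_pM => //.
- by rewrite mulr_ge0 ?Phi_term_ge0.
- by rewrite divr_ge0 ?addr_ge0.
- by rewrite ler_div_addr.
Qed.

Lemma Phi_term_le t s n : 0 <= t -> t <= s -> Phi_term t n <= Phi_term s n.
Proof.
move=> t0 ts; have := Phi_term_ratio_le t s 0 n t0 ts (leq0n n).
by rewrite !Phi_term0 !mul1r.
Qed.

Lemma Phi_term_ratio12_lt t s : 0 < t -> t < s ->
  Phi_term s 1 * Phi_term t 2 < Phi_term t 1 * Phi_term s 2.
Proof.
move=> t0 ts; have s0 := lt_trans t0 ts.
rewrite !(Phi_termS _ 1) ?ltW // mulrCA.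
by rewrite !ltr_pM2l ?Phi_term_gt0 // ltr_div_addr ?ltW.
Qed.

Lemma series_Phi_term_le t N : 0 <= t -> series (Phi_term t) N <= 1 + t.
Proof.
move=> t0; case: N => [|N]; first by rewrite seriesEord /= big_ord0 addr_ge0.
rewrite seriesEord /= big_ord_recl Phi_term0 lerD2l.
apply: le_trans (sum_index_Phi_term_le _ N.+1 t0).
rewrite big_ord_recl mul0r add0r; apply: ler_sum => i _.
by rewrite ler_peMl ?Phi_term_ge0 // ler1n.
Qed.

Lemma series_Phi_term_nd t : 0 <= t -> nondecreasing_seq (series (Phi_term t)).
Proof.
by move=> t0; apply/nondecreasing_seqP => n; rewrite seriesSr lerDl Phi_term_ge0.
Qed.

Lemma PhiE t : Phi t = limn (series (Phi_term t)).
Proof. by rewrite /Phi seriesEnat. Qed.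

Lemma cvg_series_Phi_term t : 0 <= t -> series (Phi_term t) n @[n --> \oo] --> Phi t.
Proof.
move=> t0; rewrite PhiE; apply: nondecreasing_is_cvgn.
  exact: series_Phi_term_nd.
by exists (1 + t) => _ [n _ <-]; exact: series_Phi_term_le.
Qed.

Lemma series_Phi_term_le_Phi t N : 0 <= t -> series (Phi_term t) N <= Phi t.
Proof.
move=> t0; rewrite PhiE; apply: nondecreasing_cvgn_le; first exact: series_Phi_term_nd.
by apply/cvg_ex; exists (Phi t); exact: cvg_series_Phi_term.
Qed.

Lemma Phi_term_cvg0 t : 0 <= t -> Phi_term t n @[n --> \oo] --> 0.
Proof.
by move=> t0; apply: cvg_series_cvg_0; apply/cvg_ex; eexists; exact: cvg_series_Phi_term.
Qed.

Lemma Phi_gt_head t : 0 < t -> 1 + Phi_term t 1 < Phi t.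
Proof.
move=> t0; apply: lt_le_trans (series_Phi_term_le_Phi _ 3 (ltW t0)).
rewrite seriesEord /= !big_ord_recr big_ord0 /= add0r Phi_term0.
by rewrite ltrDl Phi_term_gt0.
Qed.

Lemma Phi_gt1 t : 0 < t -> 1 < Phi t.
Proof.
by move=> t0; apply: le_lt_trans (Phi_gt_head _ t0); rewrite lerDl Phi_term_ge0 ?ltW.
Qed.

Let sum_Phi_term_tail t N : 0 <= t ->
  \sum_(i < N) Phi_term t i.+1 = series (Phi_term t) N.+1 - 1.
Proof. by move=> t0; rewrite seriesEord /= big_ord_recl Phi_term0 addrAC subrr add0r. Qed.

Let sum_index_Phi_term_tail t N : 0 <= t ->
  \sum_(i < N) i.+1%:R * Phi_term t i.+1 = t * (1 - Phi_term t N).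
Proof. by move=> t0; rewrite -sum_index_Phi_term // big_ord_recl mul0r add0r. Qed.

Let tail_product_cvg t s : 0 < t -> 0 < s ->
  (series (Phi_term t) N.+1 - 1) * (s * (1 - Phi_term s N)) @[N --> \oo] -->
  (Phi t - 1) * s.
Proof.
move=> t0 s0; have series_cvg : series (Phi_term t) N.+1 @[N --> \oo] --> Phi t.
  by have := cvg_series_Phi_term _ (ltW t0); rewrite -cvg_shiftS.
have := Phi_term_cvg0 _ (ltW s0) => /(cvgB (cvg_cst (1 : R))) /(cvgM (cvg_cst s)).
rewrite subr0 mulr1; exact: cvgM (cvgB series_cvg (cvg_cst (1 : R))).
Qed.

Lemma Phi_sub1_ratio_lt t s : 0 < t -> t < s -> (Phi s - 1) * t < (Phi t - 1) * s.
Proof.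
move=> t0 ts; have s0 := lt_trans t0 ts.
pose a i := Phi_term t i.+1; pose b i := Phi_term s i.+1.
pose w i : R := i.+1%:R.
have w_nd : {homo w : m n / (m <= n)%N >-> m <= n} by move=> m n mn; rewrite ler_nat.
have ab_lr k n : (k <= n)%N -> b k * a n <= a k * b n.
  by move=> kn; apply: Phi_term_ratio_le; rewrite ?ltW.
(* By sum_index_Phi_term, the Chebyshev gap of the tails of the two series
   tends to (Phi t - 1) s - (Phi s - 1) t, and its (0, 1) term keeps it away
   from 0. *)
pose gap N := (series (Phi_term t) N.+1 - 1) * (s * (1 - Phi_term s N)) -
              (series (Phi_term s) N.+1 - 1) * (t * (1 - Phi_term t N)).
have gapE N : chebyshev_gap a b w N = gap N.
  by rewrite /chebyshev_gap !sum_Phi_term_tail ?sum_index_Phi_term_tail ?ltW.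
have c_gt0 : 0 < a 0 * b 1 - b 0 * a 1 by rewrite subr_gt0 Phi_term_ratio12_lt.
have gap_ge N : a 0 * b 1 - b 0 * a 1 <= gap N.+2 *+ 2.
  have w10 : w 1 - w 0 = 1 by rewrite /w -natrB.
  by rewrite -gapE -[X in X <= _]mulr1 -w10 chebyshev_gap_ge.
have gap_cvg : gap N @[N --> \oo] --> (Phi t - 1) * s - (Phi s - 1) * t.
  exact: cvgB (tail_product_cvg _ _ t0 s0) (tail_product_cvg _ _ s0 t0).
have : a 0 * b 1 - b 0 * a 1 <= lim (gap N *+ 2 @[N --> \oo]).
  apply: limr_ge; first by apply/cvg_ex; eexists; exact: cvgMn gap_cvg.
  by exists 2%N => // N /= /subnK <-; rewrite addn2 gap_ge.
rewrite (cvg_lim _ (cvgMn gap_cvg)) // => /(lt_le_trans c_gt0).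
by rewrite pmulrn_lgt0 // subr_gt0.
Qed.

Lemma Phi_le t s : 0 <= t -> t <= s -> Phi t <= Phi s.
Proof.
move=> t0 ts; rewrite !PhiE; apply: ler_lim.
- by apply/cvg_ex; eexists; exact: cvg_series_Phi_term.
- by apply/cvg_ex; eexists; exact: cvg_series_Phi_term _ (le_trans t0 ts).
- by near=> n; rewrite !seriesEord ler_sum // => i _; exact: Phi_term_le.
Unshelve. all: by end_near.
Qed.

Lemma Phi_dist_le (x y : R) : 0 < x -> 0 < y ->
  `|Phi y - Phi x| <= (Phi x - 1) / x * `|y - x|.
Proof.
move=> x0 y0; rewrite mulrAC ler_pdivlMr //.
have [yx|xy|<-] := ltgtP y x; last by rewrite !subrr normr0 mul0r mulr0.
- have := Phi_sub1_ratio_lt _ _ y0 yx; have := Phi_le _ _ (ltW y0) (ltW yx).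
  move=> Phi_yx; rewrite !ler0_norm ?subr_le0 ?(ltW yx) //; nra.
- have := Phi_sub1_ratio_lt _ _ x0 xy; have := Phi_le _ _ (ltW x0) (ltW xy).
  move=> Phi_xy; rewrite !ger0_norm ?subr_ge0 ?(ltW xy) //; nra.
Qed.

Lemma Phi_continuous (x : R) : 0 < x -> {for x, continuous Phi}.
Proof.
move=> x0; apply/cvgrPdist_lt => e e0.
have L_ge0 : 0 <= (Phi x - 1) / x by rewrite divr_ge0 ?subr_ge0 ?ltW ?Phi_gt1.
pose K := (Phi x - 1) / x + 1.
have K0 : 0 < K by rewrite ltr_wpDl.
have d0 : 0 < Num.min x (e / K) by rewrite lt_min x0 divr_gt0.
near=> y.
have /andP[yx ye] : (`|x - y| < x) && (`|x - y| < e / K).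
  by rewrite -lt_min; near: y; exact: (cvgr_dist_lt id x cvg_id _ d0).
have y0 : 0 < y by move: yx; rewrite ltr_norml; lra.
rewrite distrC; apply: le_lt_trans (Phi_dist_le _ _ x0 y0) _.
rewrite distrC; apply: le_lt_trans (_ : K * `|x - y| < e).
  by rewrite ler_wpM2r // lerDl.
by rewrite mulrC -ltr_pdivlMr.
Unshelve. all: by end_near.
Qed.

Lemma Phi_le_natD_div t K : 0 <= t -> (0 < K)%N -> Phi t <= K%:R + t / K%:R.
Proof.
move=> t0 K0; have K0' : (0 : R) < K%:R by rewrite ltr0n.
rewrite PhiE; apply: limr_le.
  by apply/cvg_ex; eexists; exact: cvg_series_Phi_term.
near=> N; have KN : (K <= N)%N by near: N; exists K.
rewrite seriesEnat /= (big_cat_nat (leq0n K) KN) /=; apply: lerD.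
  apply: le_trans (_ : \sum_(0 <= i < K) (1 : R) <= _).
    by apply: ler_sum => i _; exact: Phi_term_le1.
  by rewrite sumr_const_nat subn0.
pose g i := i%:R * Phi_term t i / K%:R.
have g_ge0 i : 0 <= g i by rewrite /g divr_ge0 // mulr_ge0 // Phi_term_ge0.
apply: le_trans (_ : \sum_(0 <= i < N) g i <= _); last first.
  by rewrite -mulr_suml big_mkord ler_pM2r ?invr_gt0 ?sum_index_Phi_term_le.
rewrite (big_cat_nat (leq0n K) KN) /= -[leLHS]add0r.
apply: lerD; first by apply: sumr_ge0 => i _.
apply: ler_sum_nat => i /andP[Ki _].
by rewrite /g ler_pdivlMr // mulrC ler_wpM2r ?Phi_term_ge0 ?ler_nat.
Unshelve. all: by end_near.
Qed.

Lemma Phi_eq_exists (m : R) : 1 < m -> exists2 t, 0 < t & Phi t = 1 + t / m.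
Proof.
move=> m1; have m0 : 0 < m by lra.
pose f t := Phi t - 1 - t / m.
(* At a = (m - 1) / 2, Phi a - 1 > a / (a + 1) > a / m; at b = 2 m K with
   K > 2 m, Phi b - 1 <= K + 2 m - 1 < 2 K = b / m. *)
pose a := (m - 1) / 2.
have a0 : 0 < a by rewrite divr_gt0 ?subr_gt0.
have fa : 0 < f a.
  have := Phi_gt_head _ a0; rewrite Phi_term1 ?ltW // /f => Phi_a.
  suff : a / m < a / (a + 1) by lra.
  by rewrite ltr_pM2l // ltf_pV2 ?posrE /a; lra.
pose K := (Num.truncn (2 * m)).+1.
have K2m : 2 * m < K%:R by exact: truncnS_gt.
pose b := 2 * m * K%:R.
have fb : f b < 0.
  have b0 : 0 <= b by rewrite /b !mulr_ge0 ?ltW.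
  have bK : b / K%:R = 2 * m by rewrite mulfK ?pnatr_eq0.
  have bm : b / m = 2 * K%:R by rewrite /b mulrAC mulfK ?gt_eqF.
  by have := Phi_le_natD_div b K b0 isT; rewrite /f bm bK; lra.
have ab : a <= b.
  have : 1 <= K%:R :> R by rewrite ler1n.
  rewrite /a /b; nra.
have f_cont : {within `[a, b], continuous f}.
  apply: continuous_subspace_itv => x /andP[ax _].
  have x0 : 0 < x by rewrite (lt_le_trans a0).
  apply: cvgB; first by apply: cvgB; [exact: Phi_continuous | exact: cvg_cst].
  by apply: cvgMl; exact: cvg_id.
have [|t /andP[at_ _] ft] := IVT ab f_cont (v := 0).
  by rewrite ge_min le_max (ltW fa) (ltW fb) orbT.
by exists t; [exact: lt_le_trans a0 at_ | move: ft; rewrite /f; lra].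
Qed.

Lemma Phi_eq_unique (m : R) : 1 < m -> exists! t, 0 < t /\ Phi t = 1 + t / m.
Proof.
move=> m1; have [t t0 Phi_t] := Phi_eq_exists _ m1.
exists t; split => // s [s0 Phi_s].
have e : (Phi s - 1) * t = (Phi t - 1) * s by rewrite Phi_s Phi_t; ring.
have [ts|st|//] := ltgtP t s.
- by have := Phi_sub1_ratio_lt _ _ t0 ts; rewrite e ltxx.
- by have := Phi_sub1_ratio_lt _ _ s0 st; rewrite e ltxx.
Qed.

End Kummer.

Definition D1 : D := exist _ 1%N isT.

Lemma sum_val_gtnE (x : nat -> D) n :
  (n < \sum_(k < n) val (x k))%N = [exists k : 'I_n, x k != D1].
Proof.
have -> : (\sum_(k < n) val (x k) = \sum_(k < n) (val (x k)).-1 + n)%N.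
  rewrite -[X in (_ + X)%N]card_ord -sum1_card -big_split /=.
  by apply: eq_bigr => k _; rewrite addn1 prednK // (valP (x k)).
rewrite -[X in (X < _)%N]add0n ltn_add2r lt0n sum_nat_eq0 negb_forall.
apply: eq_existsb => k; congr negb; apply/eqP/eqP => [h|->//].
by apply: val_inj; rewrite /= -(prednK (valP (x k))) h.
Qed.

Lemma dbar_gt1 (R : realType) n (x : nat -> D) :
  (1 < dbar n x :> R) = (n < \sum_(k < n) val (x k))%N.
Proof.
case: n => [|n]; first by rewrite /dbar !big_ord0 mulr0 ltr10.
by rewrite /dbar -natr_sum mulrC ltr_pdivlMr ?ltr0Sn // mul1r ltr_nat.
Qed.

Lemma D0E (R : realType) : D0 (R := R) = ~` [set fun _ => D1].
Proof.
apply/seteqP; split => x /=.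
  move=> [n0 gt1] x1; have := gt1 n0.+1 (leqnSn n0).
  by rewrite dbar_gt1 sum_val_gtnE x1 => /existsP[k]; rewrite eqxx.
move=> x_ne1; have [k xk] : exists k, x k != D1.
  apply: contra_notP x_ne1 => /forallNP x1; apply/funext => k.
  by apply/eqP/negPn/negP => xk; apply: (x1 k).
exists k.+1 => n kn; rewrite dbar_gt1 sum_val_gtnE.
by apply/existsP; exists (Ordinal kn).
Qed.

Lemma bigcap_cylinder (a : nat -> D) : \bigcap_n cylinder n a = [set a].
Proof.
apply/seteqP; split => [x xa | x ->] /=; last by move=> n _ i.
by apply/funext => i; exact: (xa i.+1 I i).
Qed.

Lemma measurable_cylinder n (a : nat -> D) : measurable (cylinder n a : set Dinf).
Proof. by apply: sub_gen_smallest; exists n, a. Qed.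

Lemma measurable_set1_Dinf (a : nat -> D) : measurable ([set a] : set Dinf).
Proof.
by rewrite -bigcap_cylinder; apply: bigcapT_measurable => n; exact: measurable_cylinder.
Qed.

Lemma le_geometric_eq0 (R : realType) (x : \bar R) (p : R) :
  (0 <= x)%E -> `|p| < 1 -> (forall n, x <= (p ^+ n)%:E)%E -> x = 0%E.
Proof.
move=> x0 p1 xp; apply/eqP; rewrite eq_le x0 andbT.
have pn_cvg : (p ^+ n)%:E @[n --> \oo] --> 0%:E.
  by apply: cvg_EFin; [near=> n | exact: cvg_expr].
suff : (x <= lim ((p ^+ n)%:E @[n --> \oo]))%E by rewrite (cvg_lim _ pn_cvg).
apply: lime_ge; first by apply/cvg_ex; eexists; exact: pn_cvg.
by near=> n; exact: xp.
Unshelve. all: by end_near.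
Qed.

Lemma product_measure_cst_eq0 {R : realType} {phi : D -> R}
    {P : {measure set Dinf -> \bar R}} (d : D) :
  is_product_measure phi P -> `|phi d| < 1 -> P [set fun _ => d] = 0%E.
Proof.
move=> prodP phi1; apply: le_geometric_eq0 phi1 _ => //.
move=> n; have := prodP n (fun _ => d); rewrite prodr_const card_ord => <-.
apply: le_measure; rewrite ?inE.
- exact: measurable_set1_Dinf.
- exact: measurable_cylinder.
- by move=> _ -> i _.
Qed.

Lemma varphi_D1_lt1 (R : realType) (t : R) : 0 < t -> `|varphi t D1| < 1.
Proof.
move=> t0; have := Phi_gt_head _ _ t0; rewrite -ltrBrDl => Phi_t.
have u_gt0 := Phi_term_gt0 _ _ 1 t0.
have Phi1_gt0 : 0 < Phi t - 1 by apply: lt_trans Phi_t.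
rewrite /varphi ger0_norm; last by rewrite mulr_ge0 ?invr_ge0 ?ltW.
by rewrite mulrC ltr_pdivrMr ?mul1r.
Qed.

Theorem mainTheorem7 (R : realType) (theta0 : R) (Htheta0 : 0 < theta0)
    (P : probability Dinf R) :
  is_product_measure (varphi theta0) P ->
  P (D0 (R := R)) = 1%E /\
  (forall (x : nat -> D) (n0 : nat),
     (forall n, (n0 <= n)%N -> 1 < dbar (R := R) n x) ->
     forall n, (n0 <= n)%N ->
       exists! theta : R, 0 < theta /\ Phi theta = 1 + theta / dbar n x).
Proof.
move=> prodP; split; last by move=> x n0 gt1 n n0n; exact: Phi_eq_unique _ _ (gt1 n n0n).
rewrite D0E probability_setC; last exact: measurable_set1_Dinf.
by rewrite (product_measure_cst_eq0 _ prodP) ?varphi_D1_lt1 ?sube0.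
Qed.
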